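(* Let $\alpha\in(0,1]$, $\Theta\in[0,1]$, $\delta_t>0$ and $Q>0$ be given, and define the matrices $$A=\begin{bmatrix}1&0\\ \alpha&0\end{bmatrix},\quad B=-D=\begin{bmatrix}\delta_t&-\delta_t&0&0&0\\ 0&0&\delta_t&-\delta_t&0\end{bmatrix},\quad C=\begin{bmatrix}0&1\end{bmatrix},\quad E=\begin{bmatrix}0&0&0&0&1\end{bmatrix}.$$ Consider the ramp queue system $$x(t+1)=(A+\Delta A(t))x(t)+B\tilde f(t)+Dw(t),\qquad y(t)=Cx(t)+Ew(t),\qquad t=0,1,2,\dots,$$ where $x(t)\in[0,Q]^2$, $\tilde f(t)\in\mathbb{R}^4$ is a known input, $w(t)\in\mathbb{R}^5$ is an unknown noise, and $\Delta A(t)=\begin{bmatrix}0&0\\ \theta(t)&0\end{bmatrix}$ with $\theta(t)$ unknown and $\sup_{t\ge0}|\theta(t)|\le\Theta$. Consider the filter $$\hat x(t+1)=A\hat x(t)+B\tilde f(t)+L\big(y(t)-\hat y(t)\big),\qquad \hat y(t)=C\hat x(t),$$ with initial condition $\hat x(0)\in[0,Q]^2$ and gain $L\in\mathbb{R}^{2\times 1}$, and let $e(t)=x(t)-\hat x(t)$. Suppose there exist a symmetric positive definite matrix $P\in\mathbb{R}^{2\times2}$, a vector $R\in\mathbb{R}^{2}$ and scalars $\mu_1,\mu_2,\mu_3>0$ such that $$\begin{bmatrix} -\mu_3 I & \Theta P & 0 & 0 & 0\\ \Theta P & -P & PA-RC & 0 & PD-RE\\ 0 & (PA-RC)^{\mathrm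 T} & -P+I & 0 & 0\\ 0 & 0 & 0 & (\mu_3-\mu_1)I & 0\\ 0 & (PD-RE)^{\mathrm T} & 0 & 0 & -\mu_2 I \end{bmatrix}\prec 0,$$ where the first four diagonal blocks are $2\times 2$ and the last is $5\times5$. Then, with the filter gain $L=P^{-1}R$, there exists a positive definite function $\gamma$ of $(x(0),\hat x(0))\in[0,Q]^2\times[0,Q]^2$ with values in $\mathbb{R}_{\ge0}$ such that $$\sum_{t=0}^T\|e(t)\|_2^2\le \mu_1\sum_{t=0}^T\|x(t)\|_2^2+\mu_2\sum_{t=0}^T\|w(t)\|_2^2+\gamma(x(0),\hat x(0)),\qquad T=0,1,2,\dots,$$ for any initial conditions $x(0),\hat x(0)\in[0,Q]^2$, any input $\tilde f$, any noise $w$ and any uncertainty $\theta$ with $\sup_{t\ge0}|\theta(t)|\le\Theta$.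
   Context: Model interpretation: $x(t)=(x_{\mathrm{all}}(t),x_{\mathrm{cv}}(t))^{\mathrm T}$ is the number of all vehicles and of connected vehicles queued on a freeway on-ramp (bounded by the maximum queue length $Q$), $\alpha+\theta(t)$ is the connected-vehicle penetration rate, $\delta_t$ is the metering cycle length, $\tilde f(t)$ are measured in/out flows, and $y(t)$ is the measured connected-vehicle count. $\|\cdot\|_2$ is the Euclidean norm; $X\prec0$ means $X$ is symmetric negative definite; $I$ denotes an identity matrix of the appropriate size. *)

From mathcomp Require Import all_boot all_order all_algebra.
Set Implicit Arguments. Unset Strict Implicit. Unset Printing Implicit Defensive.
Import Order.TTheory GRing.Theory Num.Theory.
Local Open Scope ring_scope.

Section Defs.
Variable R : realFieldType.

Definition Amx (alpha : R) : 'M[R]_2 :=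
  \matrix_(i < 2, j < 2)
    if (i == 0 :> nat) then (if (j == 0 :> nat) then 1 else 0)
    else (if (j == 0 :> nat) then alpha else 0).

Definition DeltaA (th : R) : 'M[R]_2 :=
  \matrix_(i < 2, j < 2)
    if (i == 1 :> nat) && (j == 0 :> nat) then th else 0.

Definition Bmx (dt : R) : 'M[R]_(2, 4) :=
  \matrix_(i < 2, j < 4)
    if (i == 0 :> nat) then
      (if (j == 0 :> nat) then dt else if (j == 1 :> nat) then - dt else 0)
    else
      (if (j == 2 :> nat) then dt else if (j == 3 :> nat) then - dt else 0).

(* D = -[B | 0] (2 x 5) = [[-dt,dt,0,0,0],[0,0,-dt,dt,0]] *)
Definition Dmx (dt : R) : 'M[R]_(2, 5) :=
  \matrix_(i < 2, j < 5)
    if (i == 0 :> nat) then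
      (if (j == 0 :> nat) then - dt else if (j == 1 :> nat) then dt else 0)
    else
      (if (j == 2 :> nat) then - dt else if (j == 3 :> nat) then dt else 0).

Definition Cmx : 'M[R]_(1, 2) :=
  \matrix_(i < 1, j < 2) if (j == 1 :> nat) then 1 else 0.

Definition Emx : 'M[R]_(1, 5) :=
  \matrix_(i < 1, j < 5) if (j == 4 :> nat) then 1 else 0.

Definition posdef (n : nat) (M : 'M[R]_n) : Prop :=
  M^T = M /\ forall v : 'cV[R]_n, v != 0 -> 0 < (v^T *m M *m v) 0 0.
Definition negdef (n : nat) (M : 'M[R]_n) : Prop :=
  M^T = M /\ forall v : 'cV[R]_n, v != 0 -> (v^T *m M *m v) 0 0 < 0.

Definition sqnorm (n : nat) (v : 'cV[R]_n) : R := \sum_(i < n) (v i 0) ^+ 2.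

Definition inbox (Q : R) (n : nat) (v : 'cV[R]_n) : Prop :=
  forall i : 'I_n, 0 <= v i 0 <= Q.

Definition LMI (Theta mu1 mu2 mu3 : R) (P : 'M[R]_2) (Rv : 'cV[R]_2)
    (A : 'M[R]_2) (C : 'M[R]_(1,2)) (D : 'M[R]_(2,5)) (E : 'M[R]_(1,5))
    : 'M[R]_(2 + (2 + (2 + (2 + 5)))) :=
  let PA := P *m A - Rv *m C in
  let PD := P *m D - Rv *m E in
  block_mx (- mu3%:M) (row_mx (Theta *: P) 0)
    (col_mx (Theta *: P) 0)
    (block_mx (- P) (row_mx PA (row_mx 0 PD))
      (col_mx PA^T (col_mx 0 PD^T))
      (block_mx (1%:M - P) (row_mx 0 0)
        (col_mx 0 0)
        (block_mx ((mu3 - mu1)%:M) 0 0 (- mu2%:M)))).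

End Defs.

(* V(e) = e^T P e is a storage function for the estimation error.  Since
   DeltaA(theta) x = Theta a with |a| <= |x|, evaluating the LMI at the stacked
   vector (a, e(t+1), e(t), x(t), w(t)) and using P e(t+1) = (PA - RC) e(t)
   + Theta P a + (PD - RE) w(t) gives the dissipation inequality
     V(e(t+1)) - V(e(t)) + |e(t)|^2 <= mu1 |x(t)|^2 + mu2 |w(t)|^2,
   the block -mu3 I paying for the uncertainty through mu3 (|x|^2 - |a|^2) >= 0.
   Summing it telescopes, and gamma(x0, xh0) = V(x0 - xh0) + |x0|^2 + |xh0|^2
   is positive definite. *)
From mathcomp Require Import all_boot all_order all_algebra.
From mathcomp Require Import ring lra.
Set Implicit Arguments. Unset Strict Implicit. Unset Printing Implicit Defensive.
Import Order.TTheory GRing.Theory Num.Theory.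
Local Open Scope ring_scope.

Section BilinearForm.
Variable R : realFieldType.

Definition bform m n (u : 'cV[R]_m) (M : 'M[R]_(m, n)) (v : 'cV[R]_n) : R :=
  (u^T *m M *m v) 0 0.

Lemma bform_block m1 m2 n1 n2 (u1 : 'cV[R]_m1) (u2 : 'cV[R]_m2)
    (v1 : 'cV[R]_n1) (v2 : 'cV[R]_n2) (A : 'M_(m1, n1)) (B : 'M_(m1, n2))
    (C : 'M_(m2, n1)) (D : 'M_(m2, n2)) :
  bform (col_mx u1 u2) (block_mx A B C D) (col_mx v1 v2) =
  bform u1 A v1 + bform u1 B v2 + bform u2 C v1 + bform u2 D v2.
Proof.
by rewrite /bform tr_col_mx mul_row_block mul_row_col !mulmxDl !mxE; ring.
Qed.

Lemma bform_row m n1 n2 (u : 'cV[R]_m) (v1 : 'cV[R]_n1) (v2 : 'cV[R]_n2)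
    (B1 : 'M_(m, n1)) (B2 : 'M_(m, n2)) :
  bform u (row_mx B1 B2) (col_mx v1 v2) = bform u B1 v1 + bform u B2 v2.
Proof. by rewrite /bform -mulmxA mul_row_col mulmxDr !mulmxA mxE. Qed.

Lemma bform_col m1 m2 n (u1 : 'cV[R]_m1) (u2 : 'cV[R]_m2) (v : 'cV[R]_n)
    (C1 : 'M_(m1, n)) (C2 : 'M_(m2, n)) :
  bform (col_mx u1 u2) (col_mx C1 C2) v = bform u1 C1 v + bform u2 C2 v.
Proof. by rewrite /bform tr_col_mx mul_row_col mulmxDl mxE. Qed.

Lemma bform0 m n (u : 'cV[R]_m) (v : 'cV[R]_n) : bform u 0 v = 0.
Proof. by rewrite /bform mulmx0 mul0mx mxE. Qed.

Lemma bform0l m n (M : 'M[R]_(m, n)) (v : 'cV[R]_n) : bform 0 M v = 0.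
Proof. by rewrite /bform trmx0 !mul0mx mxE. Qed.

Lemma bform_tr m n (u : 'cV[R]_m) (M : 'M[R]_(n, m)) (v : 'cV[R]_n) :
  bform u M^T v = bform v M u.
Proof.
have trmx11 (S : 'M[R]_1) : S 0 0 = S^T 0 0 by rewrite mxE.
by rewrite /bform trmx11 !trmx_mul !trmxK mulmxA.
Qed.

Lemma bformN m n (u : 'cV[R]_m) (M : 'M[R]_(m, n)) (v : 'cV[R]_n) :
  bform u (- M) v = - bform u M v.
Proof. by rewrite /bform mulmxN mulNmx mxE. Qed.

Lemma bformZ m n (u : 'cV[R]_m) k (M : 'M[R]_(m, n)) (v : 'cV[R]_n) :
  bform u (k *: M) v = k * bform u M v.
Proof. by rewrite /bform -scalemxAr -scalemxAl mxE. Qed.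

Lemma bformD m n (u : 'cV[R]_m) (M1 M2 : 'M[R]_(m, n)) (v : 'cV[R]_n) :
  bform u (M1 + M2) v = bform u M1 v + bform u M2 v.
Proof. by rewrite /bform mulmxDr mulmxDl mxE. Qed.

Lemma bformB m n (u : 'cV[R]_m) (M1 M2 : 'M[R]_(m, n)) (v : 'cV[R]_n) :
  bform u (M1 - M2) v = bform u M1 v - bform u M2 v.
Proof. by rewrite bformD bformN. Qed.

Lemma bformDr m n (u : 'cV[R]_m) (M : 'M[R]_(m, n)) (v1 v2 : 'cV[R]_n) :
  bform u M (v1 + v2) = bform u M v1 + bform u M v2.
Proof. by rewrite /bform mulmxDr mxE. Qed.

Lemma bformZr m n (u : 'cV[R]_m) (M : 'M[R]_(m, n)) k (v : 'cV[R]_n) :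
  bform u M (k *: v) = k * bform u M v.
Proof. by rewrite /bform -scalemxAr mxE. Qed.

Lemma bform_mulmxr m n p (u : 'cV[R]_m) (M : 'M[R]_(m, n)) (N : 'M[R]_(n, p)) v :
  bform u M (N *m v) = bform u (M *m N) v.
Proof. by rewrite /bform !mulmxA. Qed.

Lemma bform_scalar_mx n (u v : 'cV[R]_n) k : bform u k%:M v = k * bform u 1%:M v.
Proof. by rewrite -[in LHS]scalemx1 bformZ. Qed.

Lemma bform_sym n (P : 'M[R]_n) (u v : 'cV[R]_n) :
  P^T = P -> bform u P v = bform v P u.
Proof. by move=> sym_P; rewrite -{1}sym_P bform_tr. Qed.

End BilinearForm.

Section SquaredNorm.
Variable R : realFieldType.

Lemma sqnormE n (v : 'cV[R]_n) : sqnorm v = bform v 1%:M v.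
Proof.
by rewrite /bform /sqnorm mulmx1 mxE; apply: eq_bigr => i _; rewrite mxE expr2.
Qed.

Lemma sqnorm_ge0 n (v : 'cV[R]_n) : 0 <= sqnorm v.
Proof. by apply: sumr_ge0 => i _; apply: sqr_ge0. Qed.

Lemma sqnorm_eq0 n (v : 'cV[R]_n) : (sqnorm v = 0) <-> (v = 0).
Proof.
split=> [v0|->]; last by rewrite /sqnorm big1 // => i _; rewrite mxE expr0n.
apply/matrixP => i j; rewrite (ord1 j) mxE.
have /eqP := @psumr_eq0P _ _ _ (fun i => v i 0 ^+ 2) (fun i _ => sqr_ge0 _) v0 i isT.
by rewrite sqrf_eq0 => /eqP.
Qed.

Lemma sqnorm2 (v : 'cV[R]_2) : sqnorm v = v 0 0 ^+ 2 + v 1 0 ^+ 2.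
Proof.
by rewrite /sqnorm big_ord_recr big_ord1; congr (v _ _ ^+ 2 + v _ _ ^+ 2); apply: val_inj.
Qed.

Lemma sqnormZ n k (v : 'cV[R]_n) : sqnorm (k *: v) = k ^+ 2 * sqnorm v.
Proof. by rewrite /sqnorm mulr_sumr; apply: eq_bigr => i _; rewrite mxE exprMn. Qed.

End SquaredNorm.

Section DefiniteMatrices.
Variable R : realFieldType.

Lemma posdef_form_ge0 n (P : 'M[R]_n) v : posdef P -> 0 <= bform v P v.
Proof.
move=> [_ P_pos]; have [->|v_neq0] := eqVneq v 0; first by rewrite bform0l.
exact/ltW/P_pos.
Qed.

Lemma negdef_form_le0 n (M : 'M[R]_n) v : negdef M -> bform v M v <= 0.
Proof.
move=> [_ M_neg]; have [->|v_neq0] := eqVneq v 0; first by rewrite bform0l.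
exact/ltW/M_neg.
Qed.

Lemma posdef_unitmx n (P : 'M[R]_n) : posdef P -> P \in unitmx.
Proof.
move=> [_ P_pos]; rewrite unitmxE unitfE; apply/negP => /det0P [v v_neq0 vP0].
have vT_neq0 : v^T != 0 by rewrite -(inj_eq (@trmx_inj _ _ _)) trmxK trmx0.
by have := P_pos _ vT_neq0; rewrite trmxK vP0 mul0mx mxE ltxx.
Qed.

Definition storage_bound n (P : 'M[R]_n) (z1 z2 : 'cV[R]_n) : R :=
  bform (z1 - z2) P (z1 - z2) + sqnorm z1 + sqnorm z2.

Lemma storage_bound_ge0 n (P : 'M[R]_n) z1 z2 :
  posdef P -> 0 <= storage_bound P z1 z2.
Proof.
move=> P_pos; rewrite /storage_bound.
by rewrite !addr_ge0 ?posdef_form_ge0 ?sqnorm_ge0.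
Qed.

Lemma storage_bound_eq0 n (P : 'M[R]_n) z1 z2 :
  posdef P -> storage_bound P z1 z2 = 0 <-> z1 = 0 /\ z2 = 0.
Proof.
move=> P_pos; rewrite /storage_bound; split=> [bound0|[-> ->]].
  have V_ge0 := posdef_form_ge0 (z1 - z2) P_pos.
  have z1_ge0 := sqnorm_ge0 z1; have z2_ge0 := sqnorm_ge0 z2.
  by split; apply/sqnorm_eq0; lra.
by rewrite subr0 bform0l (sqnorm_eq0 0).2 // !addr0.
Qed.

End DefiniteMatrices.

Lemma dissipation_sum (R : realDomainType) (V s r : nat -> R) n :
  (forall t, V t.+1 - V t + s t <= r t) ->
  \sum_(0 <= t < n) s t + V n <= \sum_(0 <= t < n) r t + V 0%N.
Proof.
move=> step; have := @ler_sum_nat _ 0 n _ _ (fun t _ => step t).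
by rewrite big_split telescope_sumr //=; lra.
Qed.

Section RampQueueFilter.
Variable R : realFieldType.

Lemma mulmx_filter_error n p q k (P : 'M[R]_n) (Rv : 'M[R]_(n, k))
    (A DA : 'M[R]_n) (B : 'M[R]_(n, p)) (C : 'M[R]_(k, n)) (D : 'M[R]_(n, q))
    (E : 'M[R]_(k, q)) (x xh : 'cV[R]_n) (f : 'cV[R]_p) (w : 'cV[R]_q) :
  P \in unitmx ->
  P *m (((A + DA) *m x + B *m f + D *m w)
        - (A *m xh + B *m f + (invmx P *m Rv) *m ((C *m x + E *m w) - C *m xh)))
  = (P *m A - Rv *m C) *m (x - xh) + P *m (DA *m x) + (P *m D - Rv *m E) *m w.
Proof.
move=> P_unit.
rewrite !(mulmxDr, mulmxDl, mulmxN, mulNmx) !mulmxA mulmxV // !mul1mx.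
by apply/matrixP => i j; rewrite !mxE; ring.
Qed.

Lemma sqnorm_DeltaA_mulmx (th : R) (x : 'cV[R]_2) :
  sqnorm (DeltaA th *m x) = th ^+ 2 * x 0 0 ^+ 2.
Proof. by rewrite sqnorm2 !mxE !big_ord_recl !big_ord0 !mxE /=; ring. Qed.

Lemma DeltaA_mulmx_bound (Theta th : R) (x : 'cV[R]_2) : `|th| <= Theta ->
  exists2 a : 'cV[R]_2, DeltaA th *m x = Theta *: a & sqnorm a <= sqnorm x.
Proof.
move=> th_le; have Theta_ge0 : 0 <= Theta := le_trans (normr_ge0 _) th_le.
have x0_le : x 0 0 ^+ 2 <= sqnorm x by rewrite sqnorm2 lerDl sqr_ge0.
have [Theta0|Theta_neq0] := eqVneq Theta 0.
  have th0 : th = 0 by apply/normr0_eq0/le_anti; rewrite normr_ge0 -Theta0 th_le.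
  exists 0; last by rewrite (sqnorm_eq0 0).2 // sqnorm_ge0.
  by rewrite scaler0; apply/sqnorm_eq0; rewrite sqnorm_DeltaA_mulmx th0 expr0n mul0r.
exists (Theta^-1 *: (DeltaA th *m x)); first by rewrite scalerA mulfV // scale1r.
have c_le1 : (Theta^-1 * th) ^+ 2 <= 1.
  rewrite -(ger0_norm (sqr_ge0 _)) normrX exprn_ile1 //.
  have Theta_gt0 : 0 < Theta by rewrite lt_def Theta_neq0.
  by rewrite normrM normrV ?unitfE // (ger0_norm Theta_ge0) mulrC ler_pdivrMr ?mul1r.
rewrite sqnormZ sqnorm_DeltaA_mulmx mulrA -exprMn.
by apply: le_trans x0_le; rewrite ler_piMl ?sqr_ge0.
Qed.

Section LMI.
Variables (Theta mu1 mu2 mu3 : R) (P : 'M[R]_2) (Rv : 'cV[R]_2).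
Variables (A : 'M[R]_2) (C : 'M[R]_(1, 2)) (D : 'M[R]_(2, 5)) (E : 'M[R]_(1, 5)).
Hypothesis sym_P : P^T = P.
Let M := P *m A - Rv *m C.
Let N := P *m D - Rv *m E.

Lemma LMI_form (a e1 e x : 'cV[R]_2) (w : 'cV[R]_5) :
  let z := col_mx a (col_mx e1 (col_mx e (col_mx x w))) in
  bform z (LMI Theta mu1 mu2 mu3 P Rv A C D E) z =
    2 * Theta * bform e1 P a - bform e1 P e1 + 2 * bform e1 M e + 2 * bform e1 N w
    + sqnorm e - bform e P e + (mu3 - mu1) * sqnorm x - mu2 * sqnorm w
    - mu3 * sqnorm a.
Proof.
rewrite /LMI /= !bform_block !bform_row !bform_col !bform0 !bform_tr !bformN !bformZ.
rewrite !(bform_scalar_mx _ _ mu3) (bform_scalar_mx _ _ (mu3 - mu1)).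
rewrite (bform_scalar_mx _ _ mu2).
by rewrite (bformB e 1%:M) -!sqnormE (bform_sym a e1 sym_P); ring.
Qed.

Lemma LMI_dissipation (a e1 e x : 'cV[R]_2) (w : 'cV[R]_5) :
  0 <= mu3 -> negdef (LMI Theta mu1 mu2 mu3 P Rv A C D E) ->
  sqnorm a <= sqnorm x ->
  P *m e1 = M *m e + P *m (Theta *: a) + N *m w ->
  bform e1 P e1 - bform e P e + sqnorm e <= mu1 * sqnorm x + mu2 * sqnorm w.
Proof.
move=> mu3_ge0 LMI_neg a_le Pe1.
have := negdef_form_le0 (col_mx a (col_mx e1 (col_mx e (col_mx x w)))) LMI_neg.
have Ve1 : bform e1 P e1 = bform e1 M e + Theta * bform e1 P a + bform e1 N w.
  by rewrite -[P in LHS]mul1mx -bform_mulmxr Pe1 !bformDr !bform_mulmxr bformZr !mul1mx.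
have : 0 <= mu3 * (sqnorm x - sqnorm a) by rewrite mulr_ge0 // subr_ge0.
rewrite LMI_form Ve1; lra.
Qed.

End LMI.

End RampQueueFilter.

Theorem theorem1 (R : realFieldType) (alpha Theta dt Q : R)
  (halpha : 0 < alpha <= 1) (hTheta : 0 <= Theta <= 1) (hdt : 0 < dt) (hQ : 0 < Q)
  (P : 'M[R]_2) (Rv : 'cV[R]_2) (mu1 mu2 mu3 : R)
  (hP : posdef P) (hmu1 : 0 < mu1) (hmu2 : 0 < mu2) (hmu3 : 0 < mu3)
  (hLMI : negdef (LMI Theta mu1 mu2 mu3 P Rv (Amx alpha) (@Cmx R) (Dmx dt) (@Emx R))) :
  let L := invmx P *m Rv in
  exists gamma : 'cV[R]_2 -> 'cV[R]_2 -> R,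
    (forall z1 z2 : 'cV[R]_2, inbox Q z1 -> inbox Q z2 ->
        0 <= gamma z1 z2 /\ (gamma z1 z2 = 0 <-> (z1 = 0 /\ z2 = 0))) /\
    forall (x xh : nat -> 'cV[R]_2) (f : nat -> 'cV[R]_4) (w : nat -> 'cV[R]_5)
           (theta : nat -> R),
      (forall t, `|theta t| <= Theta) ->
      (forall t, inbox Q (x t)) ->
      inbox Q (xh 0%N) ->
      (forall t, x t.+1 = (Amx alpha + DeltaA (theta t)) *m x t + Bmx dt *m f t
                          + Dmx dt *m w t) ->
      (forall t, xh t.+1 = Amx alpha *m xh t + Bmx dt *m f t
                   + L *m ((@Cmx R *m x t + @Emx R *m w t) - @Cmx R *m xh t)) ->
      forall T : nat,
        \sum_(0 <= t < T.+1) sqnorm (x t - xh t)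
        <= mu1 * \sum_(0 <= t < T.+1) sqnorm (x t)
           + mu2 * \sum_(0 <= t < T.+1) sqnorm (w t)
           + gamma (x 0%N) (xh 0%N).
Proof.
move=> L; exists (storage_bound P); split.
  by move=> z1 z2 _ _; split; [exact: storage_bound_ge0 | exact: storage_bound_eq0].
move=> x xh f w theta theta_le _ _ x_next xh_next T.
pose V t := bform (x t - xh t) P (x t - xh t).
have step t :
    V t.+1 - V t + sqnorm (x t - xh t) <= mu1 * sqnorm (x t) + mu2 * sqnorm (w t).
  have [a DAx a_le] := DeltaA_mulmx_bound (x t) (theta_le t).
  apply: (LMI_dissipation hP.1 (ltW hmu3) hLMI a_le).
  by rewrite x_next xh_next mulmx_filter_error ?posdef_unitmx // DAx.
have := dissipation_sum T.+1 step; rewrite big_split /= -!mulr_sumr.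
have := posdef_form_ge0 (x T.+1 - xh T.+1) hP.
have := sqnorm_ge0 (x 0%N); have := sqnorm_ge0 (xh 0%N).
by rewrite /storage_bound /V; lra.
Qed.
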